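(* In $TTR$, let $T^-\in\Omega^-$ and $T^+\in\Omega^+$. (1) If $T^-\subseteq A$, then $A\in\Omega^-$ and $Fv_2(A)\subseteq Fv_2(T^-)$. (2) If $B\subseteq T^+$, then $B\in\Omega^+$ and $Fv_2(B)\subseteq Fv_2(T^+)$.
   Context: $TTR$ types: over a second-order language with first-order variables, function symbols, $n$-ary predicate variables and symbols, and a fixed system $\mathbf E$ of equations; atomic formulas $\perp$ and $X(t_1,\dots,t_n)$; constructors $\to$, $\forall x$, $\forall X$, and $\mu Cx_1\dots x_nA\langle t_1,\dots,t_n\rangle$ for $C$ an $n$-ary predicate symbol occurring and positive in $A$ ($C,\bar x$ bound). Positivity: $X$ is positive and negative in $A$ if it does not occur; positive not negative in $X(\bar t)$; polarity flips on the left of $\to$ and is unchanged on the right, under $\forall v$ ($v\ne X$) and under $\mu$. Subtyping $\subseteq$ is generated by: reflexivity; $A\subseteq A',B\subseteq B'\Rightarrow A'\to B\subseteq A\to B'$; $A[G/v]\subseteq B\Rightarrow\forall vA\subseteq B$; $A\subseteq B\Rightarrow A\subseteq\forall vB$ ($v$ not free in $A$); $A\subseteq B[v/y]\Rightarrow A\subseteq B[w/y]$ for $v=w$ an instance of an equation of $\mathbf E$; transitivity; $D[\mu C\bar xD\langle\bar z\rangle/C(\bar z)][\bar t/\bar x]\subseteq\mu C\bar xD\langle\bar t\rangle$ and its converse; $D[E/C(\bar x)]\subseteq E\Rightarrow\mu C\bar xD\langle\bar t\rangle\subseteq E[\bar t/\bar x]$. $\forall$-positive types $\Omega^+$ and $\forall$-negative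 types $\Omega^-$: atomic types are in both; if $T^+\in\Omega^+$, $T^-\in\Omega^-$ then $T^-\to T^+\in\Omega^+$ and $T^+\to T^-\in\Omega^-$; if $T^+\in\Omega^+$ then $\forall xT^+\in\Omega^+$ and $\forall XT^+\in\Omega^+$; if $T^-\in\Omega^-$ then $\forall xT^-\in\Omega^-$, and $\forall XT^-\in\Omega^-$ provided $X$ is not free in $T^-$; if $T^+\in\Omega^+$ and $C$ is an $n$-ary predicate symbol occurring and positive in $T^+$, then $\mu Cx_1\dots x_nT^+\langle t_1,\dots,t_n\rangle\in\Omega^+$. $Fv_2(T)$ is the set of free predicate variables and free predicate symbols of $T$ (with $\perp$ counted as a 0-ary predicate symbol). *)

From Stdlib Require Import List Arith PeanoNat Bool.
Import ListNotations.

Inductive term : Type :=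
| TV (n : nat)
| TF (f : nat) (args : list term).

Fixpoint tsubst (s : nat -> term) (t : term) : term :=
  match t with
  | TV n => s n
  | TF f args => TF f (map (tsubst s) args)
  end.

(** Heads of atomic formulas X(t1,...,tn): predicate variables (de Bruijn
    indices; also used for the predicate symbols bound by mu) and free
    predicate symbols (constants). *)
Inductive phead : Type :=
| HVar (i : nat)
| HSym (c : nat).

(** Types.
    - [TAllF A]   : forall x A            (binds first-order index 0)
    - [TAllP n A] : forall X A, X n-ary   (binds predicate index 0)
    - [TMu A ts]  : mu C x1..xn A <t1..tn>, n = length ts; in [A] the
                    predicate index 0 is C and the first-order indices
                    0..n-1 are x1..xn; [ts] lives in the outer scope. *)
Inductive ty : Type :=
| TBot
| TAtom (h : phead) (args : list term)
| TArr (A B : ty)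
| TAllF (A : ty)
| TAllP (n : nat) (A : ty)
| TMu (A : ty) (args : list term).

Definition shiftT : nat -> term := fun n => TV (S n).
Definition upF (s : nat -> term) : nat -> term :=
  fun n => match n with 0 => TV 0 | S m => tsubst shiftT (s m) end.
Fixpoint upFn (k : nat) (s : nat -> term) : nat -> term :=
  match k with 0 => s | S k => upF (upFn k s) end.

Fixpoint fsub (s : nat -> term) (A : ty) : ty :=
  match A with
  | TBot => TBot
  | TAtom h ts => TAtom h (map (tsubst s) ts)
  | TArr A B => TArr (fsub s A) (fsub s B)
  | TAllF A => TAllF (fsub (upF s) A)
  | TAllP n A => TAllP n (fsub s A)
  | TMu A ts => TMu (fsub (upFn (length ts) s) A) (map (tsubst s) ts)
  end.

Definition instk (k : nat) (ts : list term) : nat -> term :=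
  fun j => if j <? k then nth j ts (TV 0) else TV (j - k).

Definition liftFc (c d : nat) : nat -> term :=
  fun j => if j <? c then TV j else TV (j + d).

Definition hren (r : nat -> nat) (h : phead) : phead :=
  match h with HVar i => HVar (r i) | HSym c => HSym c end.
Definition upR (r : nat -> nat) (n : nat) : nat :=
  match n with 0 => 0 | S m => S (r m) end.
Fixpoint pren (r : nat -> nat) (A : ty) : ty :=
  match A with
  | TBot => TBot
  | TAtom h ts => TAtom (hren r h) ts
  | TArr A B => TArr (pren r A) (pren r B)
  | TAllF A => TAllF (pren r A)
  | TAllP n A => TAllP n (pren (upR r) A)
  | TMu A ts => TMu (pren (upR r) A) ts
  end.

(** Second-order substitution A[G/X]: replace the predicate index c by the
    abstraction G with k parameters (G's first-order indices 0..k-1 are the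
    parameters, the others refer to the ambient scope; G's predicate indices
    refer to the scope where index c has been removed). *)
Fixpoint psub (c k : nat) (G : ty) (A : ty) : ty :=
  match A with
  | TBot => TBot
  | TAtom (HVar i) ts =>
      if i =? c then fsub (instk k ts) G
      else if c <? i then TAtom (HVar (pred i)) ts
      else TAtom (HVar i) ts
  | TAtom h ts => TAtom h ts
  | TArr A B => TArr (psub c k G A) (psub c k G B)
  | TAllF A => TAllF (psub c k (fsub (liftFc k 1) G) A)
  | TAllP n A => TAllP n (psub (S c) k (pren S G) A)
  | TMu A ts => TMu (psub (S c) k (pren S (fsub (liftFc k (length ts)) G)) A) ts
  end.

Fixpoint occ (c : nat) (A : ty) : bool :=
  match A with
  | TBot => false
  | TAtom (HVar i) _ => i =? c
  | TAtom _ _ => false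
  | TArr A B => occ c A || occ c B
  | TAllF A => occ c A
  | TAllP _ A => occ (S c) A
  | TMu A _ => occ (S c) A
  end.

Fixpoint pos (c : nat) (A : ty) {struct A} : bool :=
  match A with
  | TBot => true
  | TAtom _ _ => true
  | TArr A B => neg c A && pos c B
  | TAllF A => pos c A
  | TAllP _ A => pos (S c) A
  | TMu A _ => pos (S c) A
  end
with neg (c : nat) (A : ty) {struct A} : bool :=
  match A with
  | TBot => true
  | TAtom (HVar i) _ => negb (i =? c)
  | TAtom _ _ => true
  | TArr A B => pos c A && neg c B
  | TAllF A => neg c A
  | TAllP _ A => neg (S c) A
  | TMu A _ => neg (S c) A
  end.

Fixpoint wf (A : ty) : bool :=
  match A with
  | TBot => true
  | TAtom _ _ => true
  | TArr A B => wf A && wf B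
  | TAllF A => wf A
  | TAllP _ A => wf A
  | TMu A _ => occ 0 A && pos 0 A && wf A
  end.

(** One-step unfolding  D[mu C x D<z>/C(z)][ts/x]. *)
Definition unfoldMu (D : ty) (ts : list term) : ty :=
  let n := length ts in
  let G := TMu (fsub (liftFc n (2 * n)) D) (map TV (seq 0 n)) in
  fsub (instk n ts) (psub 0 n G D).

Inductive sub (E : term -> term -> Prop) : ty -> ty -> Prop :=
| S_refl A : wf A = true -> sub E A A
| S_arr A A' B B' : sub E A A' -> sub E B B' -> sub E (TArr A' B) (TArr A B')
| S_allEF A t B : wf A = true ->
    sub E (fsub (instk 1 [t]) A) B -> sub E (TAllF A) B
| S_allEP n A G B : wf A = true -> wf G = true ->
    sub E (psub 0 n G A) B -> sub E (TAllP n A) B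
| S_allIF A B : wf A = true -> sub E (fsub shiftT A) B -> sub E A (TAllF B)
| S_allIP n A B : wf A = true -> sub E (pren S A) B -> sub E A (TAllP n B)
| S_eq A B l r (s : nat -> term) : wf B = true -> E l r ->
    sub E A (fsub (instk 1 [tsubst s l]) B) ->
    sub E A (fsub (instk 1 [tsubst s r]) B)
| S_trans A B C : sub E A B -> sub E B C -> sub E A C
| S_unfold D ts : wf (TMu D ts) = true -> sub E (unfoldMu D ts) (TMu D ts)
| S_fold D ts : wf (TMu D ts) = true -> sub E (TMu D ts) (unfoldMu D ts)
| S_ind D ts E' : wf (TMu D ts) = true -> wf E' = true ->
    sub E (psub 0 (length ts) (fsub (liftFc (length ts) (length ts)) E') D) E' ->
    sub E (TMu D ts) (fsub (instk (length ts) ts) E').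

Inductive OmegaP : ty -> Prop :=
| OP_bot : OmegaP TBot
| OP_atom h ts : OmegaP (TAtom h ts)
| OP_arr A B : OmegaN A -> OmegaP B -> OmegaP (TArr A B)
| OP_allF A : OmegaP A -> OmegaP (TAllF A)
| OP_allP n A : OmegaP A -> OmegaP (TAllP n A)
| OP_mu A ts : OmegaP A -> occ 0 A = true -> pos 0 A = true -> OmegaP (TMu A ts)
with OmegaN : ty -> Prop :=
| ON_bot : OmegaN TBot
| ON_atom h ts : OmegaN (TAtom h ts)
| ON_arr A B : OmegaP A -> OmegaN B -> OmegaN (TArr A B)
| ON_allF A : OmegaN A -> OmegaN (TAllF A)
| ON_allP n A : OmegaN A -> occ 0 A = false -> OmegaN (TAllP n A).

Inductive pname : Type :=
| PV (i : nat)
| PS (c : nat)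
| PBot.

Fixpoint fv2 (d : nat) (A : ty) (p : pname) : Prop :=
  match A with
  | TBot => p = PBot
  | TAtom (HVar i) _ => d <= i /\ p = PV (i - d)
  | TAtom (HSym c) _ => p = PS c
  | TArr A B => fv2 d A p \/ fv2 d B p
  | TAllF A => fv2 d A p
  | TAllP _ A => fv2 (S d) A p
  | TMu A _ => fv2 (S d) A p
  end.

Definition Fv2 (A : ty) (p : pname) : Prop := fv2 0 A p.

(* Both halves are proved together, by induction on the derivation of A ⊆ B, as the single
   invariant: if A is ∀-negative then so is B with Fv2 B ⊆ Fv2 A, and if B is ∀-positive then
   so is A with Fv2 A ⊆ Fv2 B.  Each rule reduces to a substitution property: first-order
   substitution and predicate renaming change neither the classes Ω± nor Fv2; substituting a
   ∀-positive G at positive (negative) occurrences keeps a type in Ω+ (Ω-), and conversely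
   A[G/X] ∈ Ω± forces A ∈ Ω±.  A μ-type is never ∀-negative, which is what rules out a
   ∀-negative unfolding. *)

From Stdlib Require Import List PeanoNat Bool Lia FinFun.

Lemma OmegaP_TArr A B : OmegaP (TArr A B) <-> OmegaN A /\ OmegaP B.
Proof. split; [intro H; inversion H | intros []; constructor]; auto. Qed.

Lemma OmegaN_TArr A B : OmegaN (TArr A B) <-> OmegaP A /\ OmegaN B.
Proof. split; [intro H; inversion H | intros []; constructor]; auto. Qed.

Lemma OmegaP_TAllF A : OmegaP (TAllF A) <-> OmegaP A.
Proof. split; [intro H; inversion H | constructor]; auto. Qed.

Lemma OmegaN_TAllF A : OmegaN (TAllF A) <-> OmegaN A.
Proof. split; [intro H; inversion H | constructor]; auto. Qed.

Lemma OmegaP_TAllP n A : OmegaP (TAllP n A) <-> OmegaP A.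
Proof. split; [intro H; inversion H | constructor]; auto. Qed.

Lemma OmegaN_TAllP n A : OmegaN (TAllP n A) <-> OmegaN A /\ occ 0 A = false.
Proof. split; [intro H; inversion H | intros []; constructor]; auto. Qed.

Lemma OmegaP_TMu A ts :
  OmegaP (TMu A ts) <-> OmegaP A /\ occ 0 A = true /\ pos 0 A = true.
Proof. split; [intro H; inversion H | intros (? & ? & ?); constructor]; auto. Qed.

Lemma OmegaN_TMu A ts : ~ OmegaN (TMu A ts).
Proof. intro H; inversion H. Qed.

Lemma polarity_not_occ j A : occ j A = false -> pos j A = true /\ neg j A = true.
Proof.
  revert j; induction A as [| [i|c] ts | A IHA B IHB | A IHA | n A IHA | A IHA ts];
    intros j Hocc; simpl in *; auto.
  - rewrite Hocc; auto.
  - apply orb_false_iff in Hocc as [HA HB].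
    destruct (IHA j HA) as [-> ->], (IHB j HB) as [-> ->]; auto.
Qed.

Lemma occ_fsub s c A : occ c (fsub s A) = occ c A.
Proof.
  revert s c; induction A as [| [i|c'] ts | A IHA B IHB | A IHA | n A IHA | A IHA ts];
    intros s c; simpl; rewrite ?IHA, ?IHB; auto.
Qed.

Lemma polarity_fsub s c A : pos c (fsub s A) = pos c A /\ neg c (fsub s A) = neg c A.
Proof.
  revert s c; induction A as [| [i|c'] ts | A IHA B IHB | A IHA | n A IHA | A IHA ts];
    intros s c; simpl; auto.
  destruct (IHA s c) as [-> ->], (IHB s c) as [-> ->]; auto.
Qed.

Lemma pos_fsub s c A : pos c (fsub s A) = pos c A.
Proof. apply polarity_fsub. Qed.

Lemma fv2_fsub s d A p : fv2 d (fsub s A) p <-> fv2 d A p.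
Proof.
  revert s d; induction A as [| [i|c] ts | A IHA B IHB | A IHA | n A IHA | A IHA ts];
    intros s d; simpl; rewrite ?IHA, ?IHB; tauto.
Qed.

Lemma Omega_fsub s A : (OmegaP (fsub s A) <-> OmegaP A) /\ (OmegaN (fsub s A) <-> OmegaN A).
Proof.
  revert s; induction A as [| h ts | A IHA B IHB | A IHA | n A IHA | A IHA ts]; intros s; simpl.
  - tauto.
  - split; split; constructor.
  - rewrite !OmegaP_TArr, !OmegaN_TArr. destruct (IHA s), (IHB s); tauto.
  - rewrite !OmegaP_TAllF, !OmegaN_TAllF. apply IHA.
  - rewrite !OmegaP_TAllP, !OmegaN_TAllP, occ_fsub. destruct (IHA s); tauto.
  - rewrite !OmegaP_TMu, occ_fsub, pos_fsub. destruct (IHA (upFn (length ts) s)).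
    generalize (OmegaN_TMu A ts) (OmegaN_TMu (fsub (upFn (length ts) s) A) (map (tsubst s) ts)).
    tauto.
Qed.

Lemma OmegaP_fsub s A : OmegaP (fsub s A) <-> OmegaP A.
Proof. apply Omega_fsub. Qed.

Lemma OmegaN_fsub s A : OmegaN (fsub s A) <-> OmegaN A.
Proof. apply Omega_fsub. Qed.

Lemma upR_injective r : Injective r -> Injective (upR r).
Proof. intros Hr [|a] [|b] E; simpl in E; try discriminate; auto. Qed.

Lemma occ_pren r j A : Injective r -> occ (r j) (pren r A) = occ j A.
Proof.
  revert r j; induction A as [| [i|c] ts | A IHA B IHB | A IHA | n A IHA | A IHA ts];
    intros r j Hr; simpl; auto.
  - destruct (Nat.eqb_spec i j) as [->|Hij]; [apply Nat.eqb_refl|].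
    apply Nat.eqb_neq; intro E; apply Hij, Hr, E.
  - rewrite IHA, IHB; auto.
  - apply (IHA (upR r) (S j)), upR_injective, Hr.
  - apply (IHA (upR r) (S j)), upR_injective, Hr.
Qed.

Lemma occ_pren_not_in_range r j A : (forall i, r i <> j) -> occ j (pren r A) = false.
Proof.
  revert r j; induction A as [| [i|c] ts | A IHA B IHB | A IHA | n A IHA | A IHA ts];
    intros r j Hr; simpl; auto.
  - apply Nat.eqb_neq, Hr.
  - rewrite IHA, IHB; auto.
  - apply IHA. intros [|i] E; [discriminate|]. injection E; apply Hr.
  - apply IHA. intros [|i] E; [discriminate|]. injection E; apply Hr.
Qed.

Lemma occ0_pren_S A : occ 0 (pren S A) = false.
Proof. apply occ_pren_not_in_range; discriminate. Qed.

Lemma polarity_pren r j A :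
  Injective r -> pos (r j) (pren r A) = pos j A /\ neg (r j) (pren r A) = neg j A.
Proof.
  revert r j; induction A as [| [i|c] ts | A IHA B IHB | A IHA | n A IHA | A IHA ts];
    intros r j Hr; simpl; auto.
  - split; auto. f_equal.
    destruct (Nat.eqb_spec i j) as [->|Hij]; [apply Nat.eqb_refl|].
    apply Nat.eqb_neq; intro E; apply Hij, Hr, E.
  - destruct (IHA r j Hr) as [-> ->], (IHB r j Hr) as [-> ->]; auto.
  - apply (IHA (upR r) (S j)), upR_injective, Hr.
  - apply (IHA (upR r) (S j)), upR_injective, Hr.
Qed.

Lemma Omega_pren r A :
  Injective r -> (OmegaP (pren r A) <-> OmegaP A) /\ (OmegaN (pren r A) <-> OmegaN A).
Proof.
  revert r; induction A as [| h ts | A IHA B IHB | A IHA | n A IHA | A IHA ts];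
    intros r Hr; simpl.
  - tauto.
  - split; split; constructor.
  - rewrite !OmegaP_TArr, !OmegaN_TArr. destruct (IHA r Hr), (IHB r Hr); tauto.
  - rewrite !OmegaP_TAllF, !OmegaN_TAllF. auto.
  - rewrite !OmegaP_TAllP, !OmegaN_TAllP.
    pose proof (occ_pren (upR r) 0 A (upR_injective r Hr)) as Hocc; simpl in Hocc.
    rewrite Hocc. destruct (IHA (upR r) (upR_injective r Hr)); tauto.
  - rewrite !OmegaP_TMu.
    pose proof (occ_pren (upR r) 0 A (upR_injective r Hr)) as Hocc; simpl in Hocc.
    pose proof (proj1 (polarity_pren (upR r) 0 A (upR_injective r Hr))) as Hpos; simpl in Hpos.
    rewrite Hocc, Hpos. destruct (IHA (upR r) (upR_injective r Hr)).
    generalize (OmegaN_TMu A ts) (OmegaN_TMu (pren (upR r) A) ts). tauto.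
Qed.

Lemma S_injective : Injective S.
Proof. intros a b E; injection E; auto. Qed.

Lemma OmegaP_pren_S A : OmegaP (pren S A) <-> OmegaP A.
Proof. apply Omega_pren, S_injective. Qed.

Lemma OmegaN_pren_S A : OmegaN (pren S A) <-> OmegaN A.
Proof. apply Omega_pren, S_injective. Qed.

Definition shift_pname (p : pname) : pname :=
  match p with PV i => PV (S i) | q => q end.

Lemma fv2_shift_pname d A p : fv2 d A (shift_pname p) <-> fv2 (S d) A p.
Proof.
  revert d; induction A as [| [i|c] ts | A IHA B IHB | A IHA | n A IHA | A IHA ts];
    intros d; simpl; rewrite ?IHA, ?IHB; try tauto.
  - destruct p; simpl; split; congruence.
  - destruct p as [j| |]; simpl; split; intros [? E]; try discriminate;
      injection E; intros; split; try lia; f_equal; lia.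
  - destruct p; simpl; split; congruence.
Qed.

Lemma fv2_PV_occ d i A : fv2 d A (PV i) <-> occ (i + d) A = true.
Proof.
  revert d; induction A as [| [j|c] ts | A IHA B IHB | A IHA | n A IHA | A IHA ts];
    intros d; simpl; rewrite ?orb_true_iff, ?IHA, ?IHB, ?Nat.add_succ_r;
    try tauto; try (split; discriminate).
  rewrite Nat.eqb_eq. split.
  - intros [? E]; injection E; lia.
  - intros; split; [lia | f_equal; lia].
Qed.

Lemma fv2_pren_insert r m d p A :
  (forall j, j < m -> r j = j) -> (forall j, m <= j -> r j = S j) -> m <= d ->
  (fv2 (S d) (pren r A) p <-> fv2 d A p).
Proof.
  revert r m d; induction A as [| [i|c] ts | A IHA B IHB | A IHA | n A IHA | A IHA ts];
    intros r m d Hlow Hhigh Hmd; simpl; try tauto.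
  - destruct (Nat.lt_ge_cases i m).
    + rewrite Hlow by assumption. split; intros [? ?]; lia.
    + rewrite Hhigh by assumption.
      split; intros [? ->]; split; try lia; f_equal; lia.
  - rewrite (IHA r m), (IHB r m); tauto.
  - apply (IHA r m); auto.
  - apply (IHA (upR r) (S m)); try lia.
    + intros [|j] Hj; simpl; auto. rewrite Hlow; auto; lia.
    + intros [|j] Hj; simpl; [lia|]. rewrite Hhigh; auto; lia.
  - apply (IHA (upR r) (S m)); try lia.
    + intros [|j] Hj; simpl; auto. rewrite Hlow; auto; lia.
    + intros [|j] Hj; simpl; [lia|]. rewrite Hhigh; auto; lia.
Qed.

Lemma fv2_pren_S d p A : fv2 (S d) (pren S A) p <-> fv2 d A p.
Proof. apply (fv2_pren_insert S 0); auto; intros; lia. Qed.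

Ltac case_index i c :=
  destruct (Nat.eqb_spec i c) as [->|?]; [|destruct (Nat.ltb_spec c i)]; simpl.

Lemma occ_psub_below c k G j A :
  j < c -> occ j A = true -> occ j (psub c k G A) = true.
Proof.
  revert c G j; induction A as [| [i|c'] ts | A IHA B IHB | A IHA | n A IHA | A IHA ts];
    intros c G j Hjc Hocc; simpl in *; try discriminate.
  - apply Nat.eqb_eq in Hocc as ->. case_index j c; try lia. apply Nat.eqb_refl.
  - apply orb_true_iff in Hocc as [H|H]; apply orb_true_iff; [left|right]; auto.
  - auto.
  - apply IHA; auto; lia.
  - apply IHA; auto; lia.
Qed.

Lemma occ_psub_below_false c k G j A :
  j < c -> occ j G = false -> occ j A = false -> occ j (psub c k G A) = false.
Proof.
  revert c G j; induction A as [| [i|c'] ts | A IHA B IHB | A IHA | n A IHA | A IHA ts];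
    intros c G j Hjc HG Hocc; simpl in *; auto.
  - case_index i c; auto.
    + rewrite occ_fsub; auto.
    + apply Nat.eqb_neq; lia.
  - apply orb_false_iff in Hocc as [HA HB]. rewrite IHA, IHB; auto.
  - apply IHA; auto. rewrite occ_fsub; auto.
  - apply IHA; auto; try lia. rewrite (occ_pren S j); auto using S_injective.
  - apply IHA; auto; try lia. rewrite (occ_pren S j), occ_fsub; auto using S_injective.
Qed.

Lemma polarity_psub_below c k G j A : j < c -> occ j G = false ->
  (pos j A = true -> pos j (psub c k G A) = true) /\
  (neg j A = true -> neg j (psub c k G A) = true).
Proof.
  revert c G j; induction A as [| [i|c'] ts | A IHA B IHB | A IHA | n A IHA | A IHA ts];
    intros c G j Hjc HG; simpl; auto.
  - case_index i c; auto.
    + destruct (polarity_fsub (instk k ts) j G) as [-> ->]. apply polarity_not_occ in HG; tauto.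
    + split; auto. intros _. apply negb_true_iff, Nat.eqb_neq; lia.
  - destruct (IHA c G j Hjc HG) as [PA NA], (IHB c G j Hjc HG) as [PB NB].
    split; intro Hpol; apply andb_true_iff in Hpol as [? ?]; apply andb_true_iff; auto.
  - apply IHA; auto. rewrite occ_fsub; auto.
  - apply IHA; try lia. rewrite (occ_pren S j); auto using S_injective.
  - apply IHA; try lia. rewrite (occ_pren S j), occ_fsub; auto using S_injective.
Qed.

Lemma Omega_psub c k G A : (occ c A = true -> OmegaP G) ->
  (OmegaP A -> pos c A = true -> OmegaP (psub c k G A)) /\
  (OmegaN A -> neg c A = true -> OmegaN (psub c k G A)).
Proof.
  revert c G; induction A as [| [i|c'] ts | A IHA B IHB | A IHA | n A IHA | A IHA ts];
    intros c G HG; simpl in *.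
  - split; intros; constructor.
  - case_index i c.
    + split; intros; [apply OmegaP_fsub; auto | discriminate].
    + split; intros; constructor.
    + split; intros; constructor.
  - split; intros; constructor.
  - rewrite !OmegaP_TArr, !OmegaN_TArr.
    destruct (IHA c G) as [PA NA]; [intro H; apply HG; rewrite H; auto|].
    destruct (IHB c G) as [PB NB]; [intro H; apply HG; rewrite H, orb_true_r; auto|].
    split; intros [] Hpol; apply andb_true_iff in Hpol as []; auto.
  - rewrite !OmegaP_TAllF, !OmegaN_TAllF.
    apply IHA. intro H; apply OmegaP_fsub; auto.
  - rewrite !OmegaP_TAllP, !OmegaN_TAllP.
    destruct (IHA (S c) (pren S G)) as [PA NA]; [intro H; apply OmegaP_pren_S; auto|].
    split; intros; [|split]; try tauto.
    apply occ_psub_below_false; try tauto; [lia | apply occ0_pren_S].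
  - rewrite !OmegaP_TMu.
    destruct (IHA (S c) (pren S (fsub (liftFc k (length ts)) G))) as [PA NA].
    { intro H; apply OmegaP_pren_S, OmegaP_fsub; auto. }
    split; intros HO; [|contradict HO; apply OmegaN_TMu].
    intros Hpol; destruct HO as (HA & Hocc & Hpos); split; [|split]; auto.
    + apply occ_psub_below; auto; lia.
    + apply polarity_psub_below; auto; [lia | apply occ0_pren_S].
Qed.

Lemma Omega_psub_reflect c k G A : wf A = true ->
  (OmegaP (psub c k G A) -> OmegaP A) /\ (OmegaN (psub c k G A) -> OmegaN A).
Proof.
  revert c G; induction A as [| h ts | A IHA B IHB | A IHA | n A IHA | A IHA ts];
    intros c G Hwf; simpl in *.
  - split; constructor.
  - split; constructor.
  - apply andb_true_iff in Hwf as [HwA HwB].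
    rewrite !OmegaP_TArr, !OmegaN_TArr.
    destruct (IHA c G HwA), (IHB c G HwB); tauto.
  - rewrite !OmegaP_TAllF, !OmegaN_TAllF. auto.
  - rewrite !OmegaP_TAllP, !OmegaN_TAllP.
    destruct (IHA (S c) (pren S G) Hwf) as [PA NA].
    split; [tauto|]. intros [HO Hocc]; split; auto.
    destruct (occ 0 A) eqn:E; auto.
    rewrite (occ_psub_below (S c) k (pren S G) 0 A) in Hocc; auto; lia.
  - apply andb_true_iff in Hwf as [Hmu HwA]. apply andb_true_iff in Hmu as [Hocc Hpos].
    rewrite !OmegaP_TMu.
    destruct (IHA (S c) (pren S (fsub (liftFc k (length ts)) G)) HwA).
    split; [tauto|]. intro HO; contradict HO; apply OmegaN_TMu.
Qed.

Lemma fv2_psub_inv d k G p A : fv2 d (psub d k G A) p ->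
  (occ d A = true /\ fv2 d G p) \/ fv2 d A (shift_pname p).
Proof.
  revert d G; induction A as [| [i|c] ts | A IHA B IHB | A IHA | n A IHA | A IHA ts];
    intros d G H; simpl in *.
  - right; subst; reflexivity.
  - revert H; case_index i d; intro Hfv.
    + left. rewrite ?Nat.eqb_refl. split; auto. rewrite fv2_fsub in Hfv; auto.
    + right. destruct Hfv as [? ->]; simpl. split; [lia | f_equal; lia].
    + destruct Hfv; lia.
  - right; subst; reflexivity.
  - destruct H as [H|H]; [destruct (IHA _ _ H) as [[Ho ?]|?] | destruct (IHB _ _ H) as [[Ho ?]|?]].
    + left; rewrite Ho; auto.
    + right; left; auto.
    + left; rewrite Ho, orb_true_r; auto.
    + right; right; auto.
  - destruct (IHA _ _ H) as [[? HG]|]; auto. left; split; auto. rewrite fv2_fsub in HG; auto.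
  - destruct (IHA _ _ H) as [[? HG]|]; auto. left; split; auto. rewrite fv2_pren_S in HG; auto.
  - destruct (IHA _ _ H) as [[? HG]|]; auto. left; split; auto.
    rewrite fv2_pren_S, fv2_fsub in HG; auto.
Qed.

Lemma fv2_psub d k G p A : fv2 d A (shift_pname p) -> fv2 d (psub d k G A) p.
Proof.
  revert d G; induction A as [| [i|c] ts | A IHA B IHB | A IHA | n A IHA | A IHA ts];
    intros d G H; simpl in *; auto.
  - destruct p; simpl in *; congruence.
  - destruct H as [? E]. destruct p as [j| |]; simpl in E; try discriminate.
    injection E; intro. case_index i d; try lia. split; [lia | f_equal; lia].
  - destruct p; simpl in *; congruence.
  - destruct H; [left|right]; auto.
Qed.

(* In a ∀-negative type every positive position carries a ∀-negative subterm, so [G]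
   would have to be ∀-negative. *)
Lemma not_OmegaN_psub c k G A : ~ OmegaN G -> occ c A = true ->
  (pos c A = true -> ~ OmegaN (psub c k G A)) /\
  (neg c A = true -> ~ OmegaP (psub c k G A)).
Proof.
  revert c G; induction A as [| [i|c'] ts | A IHA B IHB | A IHA | n A IHA | A IHA ts];
    intros c G HG Hocc; simpl in *; try discriminate.
  - apply Nat.eqb_eq in Hocc as ->. rewrite Nat.eqb_refl.
    split; intros Hpol H; [apply OmegaN_fsub in H; auto | discriminate].
  - rewrite OmegaP_TArr, OmegaN_TArr.
    split; intros Hpol [HA HB]; apply andb_true_iff in Hpol as [? ?];
      apply orb_true_iff in Hocc as [Ho|Ho];
      [ apply (proj2 (IHA c G HG Ho)) | apply (proj1 (IHB c G HG Ho))
      | apply (proj1 (IHA c G HG Ho)) | apply (proj2 (IHB c G HG Ho)) ]; auto.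
  - rewrite OmegaP_TAllF, OmegaN_TAllF.
    apply IHA; auto. rewrite OmegaN_fsub; auto.
  - rewrite OmegaP_TAllP, OmegaN_TAllP.
    destruct (IHA (S c) (pren S G)); auto; [rewrite OmegaN_pren_S; auto|]. tauto.
  - rewrite OmegaP_TMu.
    destruct (IHA (S c) (pren S (fsub (liftFc k (length ts)) G))); auto;
      [rewrite OmegaN_pren_S, OmegaN_fsub; auto|].
    split; [intros; apply OmegaN_TMu | tauto].
Qed.

Definition omega_monotone (A B : ty) : Prop :=
  (OmegaN A -> OmegaN B /\ forall p, Fv2 B p -> Fv2 A p) /\
  (OmegaP B -> OmegaP A /\ forall p, Fv2 A p -> Fv2 B p).

Lemma omega_monotone_trans A B C :
  omega_monotone A B -> omega_monotone B C -> omega_monotone A C.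
Proof. unfold omega_monotone; firstorder. Qed.

Lemma omega_monotone_of_equiv A B :
  (OmegaP A <-> OmegaP B) -> (OmegaN A <-> OmegaN B) -> (forall p, Fv2 A p <-> Fv2 B p) ->
  omega_monotone A B.
Proof. unfold omega_monotone; firstorder. Qed.

Lemma omega_monotone_refl A : omega_monotone A A.
Proof. apply omega_monotone_of_equiv; tauto. Qed.

Lemma omega_monotone_fsub_l s A : omega_monotone (fsub s A) A.
Proof.
  apply omega_monotone_of_equiv; [apply OmegaP_fsub | apply OmegaN_fsub | intro; apply fv2_fsub].
Qed.

Lemma omega_monotone_fsub_r s A : omega_monotone A (fsub s A).
Proof.
  apply omega_monotone_of_equiv;
    [symmetry; apply OmegaP_fsub | symmetry; apply OmegaN_fsub | symmetry; apply fv2_fsub].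
Qed.

Lemma omega_monotone_TAllF_l A : omega_monotone (TAllF A) A.
Proof. apply omega_monotone_of_equiv; [apply OmegaP_TAllF | apply OmegaN_TAllF | reflexivity]. Qed.

Lemma omega_monotone_TAllF_r A : omega_monotone A (TAllF A).
Proof.
  apply omega_monotone_of_equiv;
    [symmetry; apply OmegaP_TAllF | symmetry; apply OmegaN_TAllF | reflexivity].
Qed.

Lemma omega_monotone_TArr A A' B B' :
  omega_monotone A A' -> omega_monotone B B' -> omega_monotone (TArr A' B) (TArr A B').
Proof.
  unfold omega_monotone, Fv2; simpl. rewrite !OmegaP_TArr, !OmegaN_TArr. firstorder.
Qed.

Lemma omega_monotone_TAllP_psub n G A :
  wf A = true -> omega_monotone (TAllP n A) (psub 0 n G A).
Proof.
  intros Hwf; unfold omega_monotone, Fv2; simpl. rewrite OmegaP_TAllP, OmegaN_TAllP. split.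
  - intros [HA Hocc]. split.
    + apply Omega_psub; [congruence | assumption | apply polarity_not_occ, Hocc].
    + intros p Hp. apply fv2_psub_inv in Hp as [[? _]|Hp]; [congruence|].
      apply fv2_shift_pname, Hp.
  - intros HO. split.
    + apply (Omega_psub_reflect 0 n G), HO; assumption.
    + intros p Hp. apply fv2_psub, fv2_shift_pname, Hp.
Qed.

Lemma omega_monotone_TAllP_intro n A B :
  omega_monotone (pren S A) B -> omega_monotone A (TAllP n B).
Proof.
  unfold omega_monotone, Fv2; simpl. rewrite OmegaP_TAllP, OmegaN_TAllP, OmegaN_pren_S,
    OmegaP_pren_S.
  intros [HN HP]. split.
  - intros HA. destruct (HN HA) as [HB Hfv]. split; [split; [assumption|]|].
    + (* [B] cannot mention the fresh index 0, which is absent from [pren S A] *)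
      destruct (occ 0 B) eqn:Hocc; [exfalso | reflexivity].
      apply (fv2_PV_occ 0 0) in Hocc. apply Hfv, fv2_PV_occ in Hocc.
      rewrite occ0_pren_S in Hocc. discriminate.
    + intros p Hp. apply fv2_pren_S, fv2_shift_pname, Hfv, fv2_shift_pname, Hp.
  - intros HB. destruct (HP HB) as [HA Hfv]. split; [assumption|].
    intros p Hp. apply fv2_shift_pname, Hfv, fv2_shift_pname, fv2_pren_S, Hp.
Qed.

Lemma omega_monotone_TMu_psub n G D ts :
  wf (TMu D ts) = true -> omega_monotone (TMu D ts) (psub 0 n G D).
Proof.
  simpl; intros Hwf. apply andb_true_iff in Hwf as [Hmu HwD].
  apply andb_true_iff in Hmu as [Hocc Hpos].
  split; [intros HO; contradict HO; apply OmegaN_TMu|].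
  intros HO. rewrite OmegaP_TMu. unfold Fv2; simpl. split.
  - split; [|split]; auto. apply (Omega_psub_reflect 0 n G); assumption.
  - intros p Hp. apply fv2_psub, fv2_shift_pname, Hp.
Qed.

(* The unfolding substitutes a μ-type for [C] at a positive occurrence; a μ-type is never
   ∀-negative, so neither is the unfolding. *)
Lemma omega_monotone_unfoldMu D ts :
  wf (TMu D ts) = true -> omega_monotone (unfoldMu D ts) (TMu D ts).
Proof.
  simpl; intros Hwf. apply andb_true_iff in Hwf as [Hmu HwD].
  apply andb_true_iff in Hmu as [Hocc Hpos].
  unfold unfoldMu; set (n := length ts); set (G := TMu _ _). split.
  - rewrite OmegaN_fsub. intros HO; exfalso.
    apply (not_OmegaN_psub 0 n G D) in HO; auto. apply OmegaN_TMu.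
  - rewrite OmegaP_fsub, OmegaP_TMu. intros (HD & _). split.
    + apply Omega_psub; auto. intros _.
      apply OmegaP_TMu; rewrite OmegaP_fsub, occ_fsub, pos_fsub; auto.
    + unfold Fv2; intros p Hp. rewrite fv2_fsub in Hp.
      apply fv2_psub_inv in Hp as [[_ Hp]|Hp]; simpl.
      * simpl in Hp. rewrite fv2_fsub in Hp. assumption.
      * apply fv2_shift_pname, Hp.
Qed.

Lemma sub_omega_monotone E A B : sub E A B -> omega_monotone A B.
Proof.
  induction 1 as [A | A A' B B' _ IH1 _ IH2 | A t B _ _ IH | n A G B HwA _ _ IH
                 | A B _ _ IH | n A B _ _ IH | A B l r s _ _ _ IH | A B C _ IH1 _ IH2
                 | D ts Hwf | D ts Hwf | D ts E' Hwf _ _ IH].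
  - apply omega_monotone_refl.
  - apply omega_monotone_TArr; assumption.
  - eapply omega_monotone_trans, IH.
    eapply omega_monotone_trans; [apply omega_monotone_TAllF_l | apply omega_monotone_fsub_r].
  - eapply omega_monotone_trans, IH. apply omega_monotone_TAllP_psub, HwA.
  - eapply omega_monotone_trans; [|apply omega_monotone_TAllF_r].
    eapply omega_monotone_trans, IH. apply omega_monotone_fsub_r.
  - apply omega_monotone_TAllP_intro, IH.
  - eapply omega_monotone_trans; [apply IH|].
    eapply omega_monotone_trans; [apply omega_monotone_fsub_l | apply omega_monotone_fsub_r].
  - eapply omega_monotone_trans; eassumption.
  - apply omega_monotone_unfoldMu, Hwf.
  - eapply omega_monotone_trans;
      [apply omega_monotone_TMu_psub, Hwf | apply omega_monotone_fsub_r].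
  - eapply omega_monotone_trans; [apply omega_monotone_TMu_psub, Hwf|].
    eapply omega_monotone_trans; [apply IH | apply omega_monotone_fsub_r].
Qed.

Theorem theorem5p1 (E : term -> term -> Prop) (Tm Tp : ty) :
  wf Tm = true -> OmegaN Tm -> wf Tp = true -> OmegaP Tp ->
  (forall A, sub E Tm A -> OmegaN A /\ (forall p, Fv2 A p -> Fv2 Tm p)) /\
  (forall B, sub E B Tp -> OmegaP B /\ (forall p, Fv2 B p -> Fv2 Tp p)).
Proof.
  intros _ HN _ HP. split; intros X HX; apply sub_omega_monotone in HX as [HXN HXP]; auto.
Qed.
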